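(* In the setting described in the context (Schrödinger equation with short-range potential, bases $(g_n,\bar g_n)$ on the classically allowed intervals, transfer matrices $T_n$, and the quantum walk on $[n_0]$ with coins $U_n:=\mathcal{M}(T_n)$), the scattering matrix of the Schrödinger equation coincides with that of the quantum walk: $\mathbb{S}_{\mathrm{QM}}=\mathbb{S}_{\mathrm{QW}}$.
   Context: Schrödinger side. Let $h>0$ and $P(h)=-h^2\frac{d^2}{dx^2}+V(x)$ on $\mathbb{R}$, with $V$ continuous, real-valued, and satisfying $|V(x)|\le C(1+|x|)^{-1-\epsilon}$ for some $C,\epsilon>0$. Fix $0<\lambda_0\le\lambda_1$ and $\lambda\in[\lambda_0,\lambda_1]$. The Jost solutions $J^\pm_{\mathrm{in}},J^\pm_{\mathrm{out}}$ of $(P-\lambda)\varphi=0$ are characterized by $e^{i\sqrt\lambda|x|/h}J^\pm_{\mathrm{in}}(x)\to1$, $e^{-i\sqrt\lambda|x|/h}J^\pm_{\mathrm{out}}(x)\to1$ as $x\to\pm\infty$. The scattering matrix $\mathbb{S}_{\mathrm{QM}}$ is the $2\times2$ matrix with $(J^+_{\mathrm{in}},J^-_{\mathrm{in}})=(J^-_{\mathrm{out}},J^+_{\mathrm{out}})\,\mathbb{S}_{\mathrm{QM}}$. The set $\{x: V(x)\ge\lambda_0\}$ is a finite union of closed intervals $K_n=[x_{2n-1},x_{2n}]$, $n=1,\dots,n_0$, with $x_1<x_2<\dots<x_{2n_0}$ and $n_0\ge2$; set $I_0=(-\infty,x_1)$, $I_n=(x_{2n},x_{2n+1})$ for $1\le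 n\le n_0-1$, $I_{n_0}=(x_{2n_0},\infty)$. For each $n=0,\dots,n_0$ let $g_n$ be a solution of $(P-\lambda)g=0$ on $\mathbb{R}$ (associated with $I_n$) such that $(g_n,\bar g_n)$ is a basis of solutions, with $g_0=J^-_{\mathrm{out}}$, $g_{n_0}=J^+_{\mathrm{in}}$, the Wronskian $\mathcal{W}(g_n,\bar g_n)$ independent of $n$, and $(g_{n-1},\bar g_n)$ linearly independent for each $n$. Define $T_n$ ($1\le n\le n_0$) by $(g_{n-1},\bar g_{n-1})T_n=(g_n,\bar g_n)$; then $T_n\in\mathcal{T}:=\{T=(t_{jk})\in SL(2,\mathbb{C}): t_{11}=\overline{t_{22}},\ t_{12}=\overline{t_{21}}\}$. Define $\mathcal{M}:\mathcal{T}\to\mathcal{S}:=\{M\in U(2): m_{11}=m_{22}\neq0\}$ by $\mathcal{M}\begin{pmatrix}p&\bar q\\ q&\bar p\end{pmatrix}=\frac1{\bar p}\begin{pmatrix}1&\bar q\\-q&1\end{pmatrix}$, and $U_n:=\mathcal{M}(T_n)$. Quantum walk on $[n_0]=\{1,\dots,n_0\}$. Set $P_n:=\begin{pmatrix}1&0\\0&0\end{pmatrix}U_n$, $Q_n:=\begin{pmatrix}0&0\\0&1\end{pmatrix}U_n$. A state $\Psi$ consists of $\Psi(n)=(\Psi_1(n),\Psi_2(n))^T\in\mathbb{C}^2$ for $1\le n\le n_0$ and scalars $\Psi(-\infty),\Psi(+\infty)\in\mathbb{C}$ (so the state space is $\mathbb{C}^{2n_0+2}$). The evolution $\mathcal{U}$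 is: $(\mathcal{U}\Psi)(n)=P_{n+1}\Psi(n+1)+Q_{n-1}\Psi(n-1)$ for $2\le n\le n_0-1$; $(\mathcal{U}\Psi)(-\infty)=(1,0)U_1\Psi(1)$; $(\mathcal{U}\Psi)(+\infty)=(0,1)U_{n_0}\Psi(n_0)$; $(\mathcal{U}\Psi)(1)=P_2\Psi(2)+(0,\Psi_2(1))^T$; $(\mathcal{U}\Psi)(n_0)=(\Psi_1(n_0),0)^T+Q_{n_0-1}\Psi(n_0-1)$. Let $\Psi^\pm_{\mathrm{in}},\Psi^\pm_{\mathrm{out}}$ be the (unique) states with $\mathcal{U}\Psi=\Psi$ and: $(\Psi^-_{\mathrm{in}})_2(1)=1,\ \Psi^-_{\mathrm{in}}(-\infty)=0$; $(\Psi^-_{\mathrm{out}})_2(1)=0,\ \Psi^-_{\mathrm{out}}(-\infty)=1$; $(\Psi^+_{\mathrm{in}})_1(n_0)=1,\ \Psi^+_{\mathrm{in}}(+\infty)=0$; $(\Psi^+_{\mathrm{out}})_1(n_0)=0,\ \Psi^+_{\mathrm{out}}(+\infty)=1$. The scattering matrix $\mathbb{S}_{\mathrm{QW}}$ is the $2\times2$ matrix with $(\Psi^+_{\mathrm{in}},\Psi^-_{\mathrm{in}})=(\Psi^-_{\mathrm{out}},\Psi^+_{\mathrm{out}})\,\mathbb{S}_{\mathrm{QW}}$. *)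

From Stdlib Require Import Reals.
From Coquelicot Require Import Coquelicot.
Open Scope C_scope.

Definition cexpi (theta : R) : C := (cos theta, sin theta).

Definition is_sol (h : R) (V : R -> R) (lam : R) (f : R -> C) : Prop :=
  exists f1 f2 : R -> C,
    forall x : R,
      is_derive f x (f1 x) /\ is_derive f1 x (f2 x) /\
      - RtoC (h ^ 2) * f2 x + RtoC (V x - lam) * f x = 0.

Definition cconjf (f : R -> C) : R -> C := fun x => Cconj (f x).

Definition lin_indep (f g : R -> C) : Prop :=
  forall a b : C, (forall x, a * f x + b * g x = 0) -> a = 0 /\ b = 0.

Definition sol_basis h V lam (f g : R -> C) : Prop :=
  is_sol h V lam f /\ is_sol h V lam g /\ lin_indep f g /\
  (forall u, is_sol h V lam u -> exists a b : C, forall x, u x = a * f x + b * g x).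

Definition wronskian_is (f g : R -> C) (w : C) : Prop :=
  exists f1 g1 : R -> C,
    forall x, is_derive f x (f1 x) /\ is_derive g x (g1 x) /\
              f x * g1 x - f1 x * g x = w.

(* e^{s i sqrt(lam)|x|/h} J(x) -> 1 as x -> +oo (pl = true) or -oo (pl = false);
   s = +1 for "in" solutions, s = -1 for "out" solutions. *)
Definition jost_asym (h lam : R) (s : R) (pl : bool) (J : R -> C) : Prop :=
  filterlim (fun x => cexpi (s * sqrt lam * Rabs x / h) * J x)
    (Rbar_locally (if pl then p_infty else m_infty)) (locally (RtoC 1)).

Record M2 := mkM2 { m11 : C; m12 : C; m21 : C; m22 : C }.

Definition mulv (A : M2) (v : C * C) : C * C :=
  (m11 A * fst v + m12 A * snd v, m21 A * fst v + m22 A * snd v).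

(* The map M : T -> S,  M [[p, qbar],[q, pbar]] = 1/pbar [[1, qbar],[-q, 1]].
   Here p = t11, q = t21 and qbar = conj q (= t12 on T). *)
Definition Mmap (T : M2) : M2 :=
  let p := m11 T in let q := m21 T in
  mkM2 (/ Cconj p) (/ Cconj p * Cconj q) (/ Cconj p * (- q)) (/ Cconj p).

(* Quantum-walk states: Psi(n) for 1 <= n <= n0 (values outside are irrelevant),
   Psi(-oo), Psi(+oo). *)
Record qw_state := mkQW { qv : nat -> C * C; qminf : C; qpinf : C }.

Definition Pm (U : M2) (v : C * C) : C * C := (fst (mulv U v), RtoC 0).
Definition Qm (U : M2) (v : C * C) : C * C := (RtoC 0, snd (mulv U v)).
Definition addv (v w : C * C) : C * C := (fst v + fst w, snd v + snd w).

Definition qw_fixed (n0 : nat) (Uc : nat -> M2) (Psi : qw_state) : Prop :=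
  (forall n, (2 <= n <= n0 - 1)%nat ->
     qv Psi n = addv (Pm (Uc (S n)) (qv Psi (S n))) (Qm (Uc (n - 1)%nat) (qv Psi (n - 1)%nat))) /\
  qminf Psi = fst (mulv (Uc 1%nat) (qv Psi 1%nat)) /\
  qpinf Psi = snd (mulv (Uc n0) (qv Psi n0)) /\
  qv Psi 1%nat = addv (Pm (Uc 2%nat) (qv Psi 2%nat)) (RtoC 0, snd (qv Psi 1%nat)) /\
  qv Psi n0 = addv (fst (qv Psi n0), RtoC 0) (Qm (Uc (n0 - 1)%nat) (qv Psi (n0 - 1)%nat)).

Definition qw_lincomb (n0 : nat) (Psi : qw_state) (a : C) (Phi1 : qw_state)
  (b : C) (Phi2 : qw_state) : Prop :=
  (forall n, (1 <= n <= n0)%nat ->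
     qv Psi n = addv (a * fst (qv Phi1 n), a * snd (qv Phi1 n))
                     (b * fst (qv Phi2 n), b * snd (qv Phi2 n))) /\
  qminf Psi = a * qminf Phi1 + b * qminf Phi2 /\
  qpinf Psi = a * qpinf Phi1 + b * qpinf Phi2.

(* Strategy.  (1) Analytic input on Jost solutions: sampling the asymptotics
   e^{+-ik|x|} J(x) -> 1 along points of prescribed phase shows that the outgoing Jost
   solution at an end is the conjugate of the incoming one (J^+_out = conj J^+_in,
   J^-_in = conj J^-_out), and that W(J^+_in, conj J^+_in) <> 0, since otherwise the
   direction of J^+_in in the plane would be constant.  (2) Linear algebra: the
   Wronskian of (g, conj g) is multiplied by |p|^2 - |q|^2 under g |-> p g + q conj g,
   so all transfer matrices T_n lie in the class T (conjugation symmetric, determinant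
   one), and J^-_out, J^+_out are linearly independent.  (3) Walk side: for a fixed
   point Psi the pairing g_k L_k + conj g_k R_k of the basis on the k-th allowed interval
   with the amplitudes on the k-th edge is independent of k (this is exactly what the
   choice U_n = M(T_n) achieves), so Psi^+_in and Psi^+_out encode J^+_in and J^+_out in
   terms of (J^-_out, J^-_in).  The walk's scattering relations then become the
   Schroedinger ones with S_QW in place of S_QM, and independence of (J^-_out, J^+_out)
   identifies the two matrices. *)

From Stdlib Require Import Reals Lra Lia.
From Coquelicot Require Import Coquelicot.
Open Scope C_scope.

(* Complex conjugation is a ring automorphism; with [Cconj_conj] these let [ring]
   handle identities in which conjugation is applied to atoms only. *)
Lemma Cconj_add (a b : C) : Cconj (a + b) = Cconj a + Cconj b.
Proof. destruct a, b. unfold Cconj, Cplus; simpl. f_equal; ring. Qed.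

Lemma Cconj_mul (a b : C) : Cconj (a * b) = Cconj a * Cconj b.
Proof. destruct a, b. unfold Cconj, Cmult; simpl. f_equal; ring. Qed.

Lemma cexpi_add (a b : R) : cexpi a * cexpi b = cexpi (a + b).
Proof. unfold cexpi, Cmult; simpl. rewrite cos_plus, sin_plus. f_equal; ring. Qed.

Lemma cexpi_conj (a : R) : Cconj (cexpi a) = cexpi (- a).
Proof. unfold cexpi, Cconj. rewrite cos_neg, sin_neg. reflexivity. Qed.

Lemma cexpi_inv_mul (a : R) : cexpi (- a) * cexpi a = 1.
Proof.
  rewrite cexpi_add, Rplus_opp_l. unfold cexpi. rewrite cos_0, sin_0. reflexivity.
Qed.

Lemma cexpi_period (s c : R) (n : nat) :
  (s = 1 \/ s = -1)%R -> cexpi (s * (c + 2 * INR n * PI)) = cexpi (s * c).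
Proof.
  unfold cexpi. intros [-> | ->].
  - rewrite !Rmult_1_l, cos_period, sin_period. reflexivity.
  - replace (-1 * (c + 2 * INR n * PI))%R with (- (c + 2 * INR n * PI))%R by ring.
    replace (-1 * c)%R with (- c)%R by ring.
    rewrite !cos_neg, !sin_neg, cos_period, sin_period. reflexivity.
Qed.

(* C with its structure of real normed plane (the one used by [is_derive] on C). *)
Notation CR := (prod_NormedModule R_AbsRing R_NormedModule R_NormedModule).

Lemma is_linear_rform (al be : R) :
  is_linear (fun z : CR => (al * fst z + be * snd z)%R).
Proof.
  assert (scal_lin : forall k : R, is_linear (fun r : R_NormedModule => scal k r)).
  { intro k. apply (@is_linear_scal_r R_AbsRing R_NormedModule k). exact Rmult_comm. }
  apply (is_linear_ext (fun z : CR => plus (scal al (fst z)) (scal be (snd z)))); [reflexivity|].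
  apply (is_linear_comp (fun z : CR => (scal al (fst z), scal be (snd z)))
           (fun p : R_NormedModule * R_NormedModule => plus (fst p) (snd p)));
    [apply is_linear_prod | apply is_linear_plus].
  - apply (is_linear_comp (fun z : CR => fst z) (fun r : R_NormedModule => scal al r));
      [apply is_linear_fst | apply scal_lin].
  - apply (is_linear_comp (fun z : CR => snd z) (fun r : R_NormedModule => scal be r));
      [apply is_linear_snd | apply scal_lin].
Qed.

(* Every R-linear endomorphism of C has the form z |-> a z + b conj z.  These maps
   commute with derivatives and limits, which is all the calculus the proof needs:
   multiplication by a constant, conjugation and the spans (f, conj f) are of this form. *)
Definition rlin (a b z : C) : C := a * z + b * Cconj z.

Lemma is_linear_rlin (a b : C) : is_linear (rlin a b : CR -> CR).
Proof.
  apply (is_linear_ext (fun z : CR =>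
    (((fst a + fst b) * fst z + (snd b - snd a) * snd z)%R,
     ((snd a + snd b) * fst z + (fst a - fst b) * snd z)%R))).
  - intros [x y]. destruct a, b. unfold rlin, Cplus, Cmult, Cconj; simpl. f_equal; ring.
  - apply is_linear_prod; apply is_linear_rform.
Qed.

Lemma is_derive_linear {U V : NormedModule R_AbsRing} (L : U -> V) (f : R -> U) x l :
  is_linear L -> is_derive f x l -> is_derive (fun t => L (f t)) x (L l).
Proof.
  intros HL Hf. unfold is_derive in *. eapply filterdiff_ext_lin.
  - apply (filterdiff_comp' f L x _ L Hf). apply filterdiff_linear, HL.
  - intro y. apply linear_scal, HL.
Qed.

Lemma filterlim_linear {T : Type} {F : (T -> Prop) -> Prop} {FF : Filter F}
  {U V : NormedModule R_AbsRing} (L : U -> V) (u : T -> U) z :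
  is_linear L -> filterlim u F (locally z) -> filterlim (fun t => L (u t)) F (locally (L z)).
Proof. intros HL Hu. eapply filterlim_comp; [exact Hu|]. apply linear_cont, HL. Qed.

Lemma is_derive_rlin (f : R -> C) x l a b :
  is_derive f x l -> is_derive (fun t => rlin a b (f t)) x (rlin a b l).
Proof. apply (is_derive_linear (U:=CR) (V:=CR)), is_linear_rlin. Qed.

Lemma filterlim_rlin {T : Type} {F : (T -> Prop) -> Prop} {FF : Filter F} (u : T -> C) z a b :
  filterlim u F (locally z) -> filterlim (fun t => rlin a b (u t)) F (locally (rlin a b z)).
Proof. apply (filterlim_linear (U:=CR) (V:=CR)), is_linear_rlin. Qed.

Lemma rlin_conj (z : C) : rlin 0 1 z = Cconj z.
Proof. unfold rlin. ring. Qed.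

Lemma is_derive_re (f : R -> C) x l : is_derive f x l -> is_derive (fun t => fst (f t)) x (fst l).
Proof. apply (is_derive_linear (U:=CR) (V:=R_NormedModule) (fun z => fst z)), is_linear_fst. Qed.

Lemma is_derive_im (f : R -> C) x l : is_derive f x l -> is_derive (fun t => snd (f t)) x (snd l).
Proof. apply (is_derive_linear (U:=CR) (V:=R_NormedModule) (fun z => snd z)), is_linear_snd. Qed.

Lemma is_derive_C_unique (f : R -> C) x l1 l2 :
  is_derive f x l1 -> is_derive f x l2 -> l1 = l2.
Proof.
  intros H1 H2. destruct l1 as [a1 b1], l2 as [a2 b2]. f_equal.
  - apply is_derive_re, is_derive_unique in H1. apply is_derive_re, is_derive_unique in H2.
    simpl in *. congruence.
  - apply is_derive_im, is_derive_unique in H1. apply is_derive_im, is_derive_unique in H2.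
    simpl in *. congruence.
Qed.

Lemma wronskian_conj_form (g : R -> C) (w : C) :
  wronskian_is g (cconjf g) w ->
  exists dg : R -> C, forall x,
    is_derive g x (dg x) /\ g x * Cconj (dg x) - dg x * Cconj (g x) = w.
Proof.
  intros [dg [dgc Hw]]. exists dg. intro x. destruct (Hw x) as [Dg [Dgc W]].
  split; [exact Dg|].
  assert (Dconj : is_derive (cconjf g) x (Cconj (dg x))).
  { apply (is_derive_ext (fun t => rlin 0 1 (g t))).
    - intro t. apply rlin_conj.
    - rewrite <- rlin_conj. apply is_derive_rlin, Dg. }
  rewrite (is_derive_C_unique _ _ _ _ Dgc Dconj) in W. exact W.
Qed.

Lemma wronskian_transfer (g1 g2 : R -> C) (p q w1 w2 : C) :
  wronskian_is g1 (cconjf g1) w1 -> wronskian_is g2 (cconjf g2) w2 ->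
  (forall x, g2 x = p * g1 x + q * cconjf g1 x) ->
  w2 = (p * Cconj p - q * Cconj q) * w1.
Proof.
  intros W1 W2 Hg2.
  destruct (wronskian_conj_form _ _ W1) as [d1 H1].
  destruct (wronskian_conj_form _ _ W2) as [d2 H2].
  destruct (H1 0%R) as [D1 <-]. destruct (H2 0%R) as [D2 <-].
  assert (Ed2 : d2 0%R = rlin p q (d1 0%R)).
  { apply (is_derive_C_unique g2 0%R); [exact D2|].
    apply (is_derive_ext (fun t => rlin p q (g1 t))); [intro t; symmetry; apply Hg2|].
    apply is_derive_rlin, D1. }
  rewrite Ed2, Hg2. unfold rlin, cconjf.
  rewrite !Cconj_add, !Cconj_mul, !Cconj_conj. ring.
Qed.

Lemma unimodular_of_wronskian (g1 g2 : R -> C) (p q w : C) :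
  w <> 0 -> wronskian_is g1 (cconjf g1) w -> wronskian_is g2 (cconjf g2) w ->
  (forall x, g2 x = p * g1 x + q * cconjf g1 x) ->
  p * Cconj p - q * Cconj q = 1.
Proof.
  intros Hw W1 W2 Hg2. pose proof (wronskian_transfer _ _ _ _ _ _ W1 W2 Hg2) as E.
  set (k := p * Cconj p - q * Cconj q) in *.
  replace k with (k * w / w) by (field; exact Hw).
  rewrite <- E. field. exact Hw.
Qed.

(* Sample points (c + 2 n pi) / k, n in N, on which the phase k|x| is c mod 2 pi;
   [signed pl] sends them to +oo (pl = true) or -oo (pl = false). *)
Definition lattice_pt (k c : R) (n : nat) : R := ((c + 2 * INR n * PI) / k)%R.

Definition signed (pl : bool) (t : R) : R := if pl then t else (- t)%R.

Lemma lattice_pt_unbounded (k c : R) : (0 < k)%R -> is_lim_seq (lattice_pt k c) p_infty.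
Proof.
  intro Hk. unfold lattice_pt.
  apply (is_lim_seq_ext (fun n => (c / k + (2 * PI / k) * INR n)%R)).
  { intro n. field. lra. }
  assert (Hslope : (0 < 2 * PI / k)%R) by (pose proof PI_RGT_0; apply Rdiv_lt_0_compat; lra).
  apply (is_lim_seq_plus _ _ (c / k)%R p_infty p_infty (is_lim_seq_const _)); [|reflexivity].
  apply (is_lim_seq_mult _ _ (2 * PI / k)%R p_infty p_infty (is_lim_seq_const _) is_lim_seq_INR).
  apply is_Rbar_mult_sym, is_Rbar_mult_p_infty_pos, Hslope.
Qed.

Lemma lattice_to_end (k c : R) (pl : bool) : (0 < k)%R ->
  filterlim (fun n => signed pl (lattice_pt k c n)) eventually
    (Rbar_locally (if pl then p_infty else m_infty)).
Proof.
  intro Hk. destruct pl; unfold signed.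
  - apply lattice_pt_unbounded, Hk.
  - apply (is_lim_seq_opp _ p_infty), lattice_pt_unbounded, Hk.
Qed.

Lemma lattice_phase (k c : R) (pl : bool) (n : nat) : (0 < k)%R -> (0 <= c)%R ->
  (k * Rabs (signed pl (lattice_pt k c n)) = c + 2 * INR n * PI)%R.
Proof.
  intros Hk Hc. assert (Hpos : (0 <= lattice_pt k c n)%R).
  { unfold lattice_pt. pose proof PI_RGT_0. pose proof (pos_INR n).
    apply Rmult_le_pos; [nra | left; apply Rinv_0_lt_compat, Hk]. }
  assert (E : Rabs (signed pl (lattice_pt k c n)) = lattice_pt k c n).
  { destruct pl; simpl; [|rewrite Rabs_Ropp]; apply Rabs_right; lra. }
  rewrite E. unfold lattice_pt. field. lra.
Qed.

Lemma jost_lattice_limit (h lam s : R) (pl : bool) (J : R -> C) (c : R) :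
  (0 < h)%R -> (0 < lam)%R -> (0 <= c)%R -> (s = 1 \/ s = -1)%R ->
  jost_asym h lam s pl J ->
  filterlim (fun n => J (signed pl (lattice_pt (sqrt lam / h) c n))) eventually
    (locally (cexpi (- (s * c)))).
Proof.
  intros Hh Hl Hc Hs HJ.
  assert (Hk : (0 < sqrt lam / h)%R) by (apply Rdiv_lt_0_compat; [apply sqrt_lt_R0|]; lra).
  pose proof (filterlim_comp _ _ _ _ _ _ _ _ (lattice_to_end _ c pl Hk) HJ) as L.
  apply (filterlim_rlin _ _ (cexpi (- (s * c))) 0) in L.
  assert (E1 : rlin (cexpi (- (s * c))) 0 1 = cexpi (- (s * c))) by (unfold rlin; ring).
  rewrite E1 in L. eapply filterlim_ext; [|exact L].
  intro n. cbv beta.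
  set (x := signed pl (lattice_pt (sqrt lam / h) c n)).
  assert (Ephase : (s * sqrt lam * Rabs x / h = s * (c + 2 * INR n * PI))%R).
  { rewrite <- (lattice_phase (sqrt lam / h) c pl n Hk Hc). unfold x. field. lra. }
  rewrite Ephase, (cexpi_period s c n Hs). unfold rlin.
  rewrite Cmult_assoc, cexpi_inv_mul. ring.
Qed.

Lemma cexpi_quarter (s : R) : (s = 1 \/ s = -1)%R ->
  cexpi (s * (PI / 2)) = (0%R, s) /\ cexpi (- (s * (PI / 2))) = (0%R, (- s)%R).
Proof.
  unfold cexpi. intros [-> | ->].
  - rewrite Rmult_1_l, cos_neg, sin_neg, cos_PI2, sin_PI2. split; reflexivity.
  - replace (-1 * (PI / 2))%R with (- (PI / 2))%R by ring.
    rewrite Ropp_involutive, cos_neg, sin_neg, cos_PI2, sin_PI2.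
    split; f_equal; ring.
Qed.

(* Comparing the limits along
   the samples of phases 0 and pi/2 forces the coefficients to be (0, 1). *)
Lemma jost_span_conj (h lam s s' : R) (pl : bool) (J1 J2 : R -> C) (a b : C) :
  (0 < h)%R -> (0 < lam)%R -> (s = 1 \/ s = -1)%R -> (s' = - s)%R ->
  jost_asym h lam s pl J1 -> jost_asym h lam s' pl J2 ->
  (forall x, J2 x = a * J1 x + b * Cconj (J1 x)) ->
  forall x, J2 x = Cconj (J1 x).
Proof.
  intros Hh Hl Hs Hs' H1 H2 Hspan.
  assert (Hs'1 : (s' = 1 \/ s' = -1)%R) by lra.
  assert (Hcoef : forall c, (0 <= c)%R ->
            cexpi (s * c) = a * cexpi (- (s * c)) + b * cexpi (s * c)).
  { intros c Hc.
    pose proof (jost_lattice_limit h lam s pl J1 c Hh Hl Hc Hs H1) as L1.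
    pose proof (jost_lattice_limit h lam s' pl J2 c Hh Hl Hc Hs'1 H2) as L2.
    apply (filterlim_rlin _ _ a b) in L1.
    assert (L1' : filterlim (fun n => J2 (signed pl (lattice_pt (sqrt lam / h) c n))) eventually
                    (locally (rlin a b (cexpi (- (s * c)))))).
    { eapply filterlim_ext; [|exact L1]. intro n. symmetry. apply Hspan. }
    pose proof (filterlim_locally_unique (V:=CR) _ _ _ L2 L1') as E.
    rewrite Hs', Ropp_mult_distr_l, Ropp_involutive in E.
    rewrite E at 1. unfold rlin. rewrite cexpi_conj, Ropp_involutive. reflexivity. }
  pose proof (Hcoef 0%R (Rle_refl _)) as C0.
  pose proof (Hcoef (PI / 2)%R ltac:(pose proof PI_RGT_0; lra)) as C1.
  rewrite Rmult_0_r, Ropp_0 in C0. unfold cexpi in C0. rewrite cos_0, sin_0 in C0.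
  destruct (cexpi_quarter s Hs) as [Ep Em]. rewrite Ep, Em in C1.
  assert (Eab : a = 0 /\ b = 1).
  { destruct a as [a1 a2], b as [b1 b2].
    unfold Cplus, Cmult in C0, C1; simpl in C0, C1.
    injection C0; injection C1; intros.
    destruct Hs as [-> | ->]; split; apply injective_projections; simpl; nra. }
  destruct Eab as [-> ->]. intro x. rewrite Hspan. ring.
Qed.

Lemma jost_partner_conj (h : R) (V : R -> R) (lam s s' : R) (pl : bool) (J1 J2 : R -> C) :
  (0 < h)%R -> (0 < lam)%R -> (s = 1 \/ s = -1)%R -> (s' = - s)%R ->
  sol_basis h V lam J1 (cconjf J1) -> is_sol h V lam J2 ->
  jost_asym h lam s pl J1 -> jost_asym h lam s' pl J2 ->
  forall x, J2 x = Cconj (J1 x).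
Proof.
  intros Hh Hl Hs Hs' [_ [_ [_ Hspan]]] Hsol H1 H2.
  destruct (Hspan J2 Hsol) as [a [b E]].
  exact (jost_span_conj h lam s s' pl J1 J2 a b Hh Hl Hs Hs' H1 H2 E).
Qed.

Lemma jost_nonvanishing (h lam s : R) (J : R -> C) :
  jost_asym h lam s true J -> exists M, forall t, (M < t)%R -> J t <> 0.
Proof.
  intro HJ. unfold jost_asym in HJ.
  apply (filterlim_linear (U:=CR) (V:=R_NormedModule) (fun z => fst z) _ _ is_linear_fst) in HJ.
  destruct (proj1 (filterlim_locally _ _) HJ (mkposreal (1/2) ltac:(lra))) as [M HM].
  exists M. intros t Ht Z. specialize (HM t Ht). rewrite Z, Cmult_0_r in HM.
  unfold ball in HM; simpl in HM. unfold AbsRing_ball, abs, minus, plus, opp in HM; simpl in HM.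
  rewrite Rplus_0_l, Rabs_Ropp, Rabs_R1 in HM. lra.
Qed.

Lemma jost_in_real_part_near (h lam : R) (J : R -> C) (c M : R) :
  (0 < h)%R -> (0 < lam)%R -> (0 <= c)%R -> jost_asym h lam 1 true J ->
  exists t, (M < t)%R /\ (Rabs (fst (J t) - cos c) < 1/2)%R.
Proof.
  intros Hh Hl Hc HJ.
  assert (Hk : (0 < sqrt lam / h)%R) by (apply Rdiv_lt_0_compat; [apply sqrt_lt_R0|]; lra).
  set (x := fun n => signed true (lattice_pt (sqrt lam / h) c n)).
  pose proof (jost_lattice_limit h lam 1 true J c Hh Hl Hc (or_introl eq_refl) HJ) as L.
  apply (filterlim_linear (U:=CR) (V:=R_NormedModule) (fun z => fst z) _ _ is_linear_fst) in L.
  assert (Near : eventually (fun n => Rabs (fst (J (x n)) - cos c) < 1/2)%R).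
  { generalize (proj1 (filterlim_locally _ _) L (mkposreal (1/2) ltac:(lra))).
    apply filter_imp. intros n B. unfold ball in B; simpl in B.
    unfold AbsRing_ball, abs, minus, plus, opp in B; simpl in B.
    rewrite Rmult_1_l, cos_neg in B. exact B. }
  assert (Far : eventually (fun n => M < x n)%R).
  { apply (lattice_to_end (sqrt lam / h) c true Hk (fun y => M < y)%R). exists M. tauto. }
  destruct (filter_and _ _ Near Far) as [N HN].
  exists (x N). destruct (HN N (le_n N)) as [H1 H2]. split; assumption.
Qed.

Lemma direction_constant (u v du dv : R -> R) (M t1 t2 : R) :
  (forall t, (M < t)%R ->
     is_derive u t (du t) /\ is_derive v t (dv t) /\
     (v t * du t - u t * dv t = 0)%R /\ (0 < u t * u t + v t * v t)%R) ->
  (M < t1)%R -> (t1 < t2)%R ->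
  (u t1 / sqrt (u t1 * u t1 + v t1 * v t1) = u t2 / sqrt (u t2 * u t2 + v t2 * v t2))%R.
Proof.
  intros H Ht1 Ht12.
  apply (eq_is_derive (fun t => u t / sqrt (u t * u t + v t * v t))%R t1 t2); [|exact Ht12].
  intros t Ht. destruct (H t ltac:(lra)) as [Du [Dv [Cross Pos]]].
  assert (Dn2 : is_derive (fun t => u t * u t + v t * v t)%R t
                  (du t * u t + u t * du t + (dv t * v t + v t * dv t))%R).
  { apply (@is_derive_plus R_AbsRing R_NormedModule); apply Derive.is_derive_mult; auto. }
  pose proof (is_derive_sqrt _ _ _ Dn2 Pos) as Ds.
  assert (Sp : (0 < sqrt (u t * u t + v t * v t))%R) by (apply sqrt_lt_R0; exact Pos).
  pose proof (is_derive_div _ _ _ _ _ Du Ds ltac:(lra)) as Dq.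
  set (n2 := (u t * u t + v t * v t)%R) in *.
  eapply is_derive_ext; [intro; reflexivity|].
  replace (@zero R_NormedModule) with
    ((du t * sqrt n2 - u t * ((du t * u t + u t * du t + (dv t * v t + v t * dv t)) /
       (2 * sqrt n2))) / sqrt n2 ^ 2)%R; [exact Dq|].
  assert (Ss : (sqrt n2 * sqrt n2 = n2)%R) by (apply sqrt_sqrt; lra).
  assert (Num : (du t * sqrt n2 - u t * ((du t * u t + u t * du t + (dv t * v t + v t * dv t)) /
                  (2 * sqrt n2)) = v t * (v t * du t - u t * dv t) / sqrt n2)%R).
  { transitivity ((du t * (sqrt n2 * sqrt n2) - u t * (u t * du t + v t * dv t)) / sqrt n2)%R;
      [field; lra|].
    rewrite Ss. unfold n2 in *. field. lra. }
  rewrite Num, Cross. unfold Rdiv. rewrite Rmult_0_r, !Rmult_0_l. reflexivity.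
Qed.

(* The Wronskian of (J, conj J) is nonzero for an incoming Jost solution J at +oo:
   a zero Wronskian would freeze the direction of J, whose real part nevertheless
   changes sign arbitrarily far out. *)
Lemma jost_in_wronskian_nonzero (h lam : R) (J : R -> C) (w : C) :
  (0 < h)%R -> (0 < lam)%R -> jost_asym h lam 1 true J ->
  wronskian_is J (cconjf J) w -> w <> 0.
Proof.
  intros Hh Hl HJ HW Hw0.
  destruct (wronskian_conj_form _ _ HW) as [d Hd].
  destruct (jost_nonvanishing _ _ _ _ HJ) as [M HM].
  assert (Hphase : forall t, (M < t)%R ->
     is_derive (fun t => fst (J t)) t (fst (d t)) /\ is_derive (fun t => snd (J t)) t (snd (d t)) /\
     (snd (J t) * fst (d t) - fst (J t) * snd (d t) = 0)%R /\
     (0 < fst (J t) * fst (J t) + snd (J t) * snd (J t))%R).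
  { intros t Ht. destruct (Hd t) as [D W]. rewrite Hw0 in W.
    split; [apply is_derive_re, D|]. split; [apply is_derive_im, D|]. split.
    - apply (f_equal snd) in W. destruct (J t), (d t). simpl in W |- *. lra.
    - apply Rnot_le_lt. intro Hle. apply (HM t Ht). destruct (J t) as [a b]. simpl in Hle.
      apply injective_projections; simpl; nra. }
  destruct (jost_in_real_part_near h lam J 0 (Rmax M 0) Hh Hl (Rle_refl _) HJ) as [t1 [Ht1 N1]].
  destruct (jost_in_real_part_near h lam J PI t1 Hh Hl (Rlt_le _ _ PI_RGT_0) HJ) as [t2 [Ht2 N2]].
  rewrite cos_0 in N1. rewrite cos_PI in N2.
  apply Rabs_def2 in N1. apply Rabs_def2 in N2.
  pose proof (Rmax_l M 0).
  pose proof (direction_constant _ _ _ _ M t1 t2 Hphase ltac:(lra) Ht2) as E.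
  destruct (Hphase t1 ltac:(lra)) as [_ [_ [_ P1]]]. destruct (Hphase t2 ltac:(lra)) as [_ [_ [_ P2]]].
  assert (Pos : (0 < fst (J t1) / sqrt (fst (J t1) * fst (J t1) + snd (J t1) * snd (J t1)))%R)
    by (apply Rdiv_lt_0_compat; [lra | apply sqrt_lt_R0, P1]).
  assert (Neg : (fst (J t2) / sqrt (fst (J t2) * fst (J t2) + snd (J t2) * snd (J t2)) < 0)%R).
  { unfold Rdiv. apply Rmult_neg_pos; [lra|]. apply Rinv_0_lt_compat, sqrt_lt_R0, P2. }
  lra.
Qed.

Lemma lin_indep_coeff_unique (f g : R -> C) (a b a' b' : C) :
  lin_indep f g -> (forall x, a * f x + b * g x = a' * f x + b' * g x) -> a = a' /\ b = b'.
Proof.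
  intros HL E. destruct (HL (a - a') (b - b')) as [Ea Eb].
  { intro x. transitivity (a * f x + b * g x - (a' * f x + b' * g x)); [ring|].
    rewrite E. ring. }
  split.
  - replace a with (a - a' + a') by ring. rewrite Ea. ring.
  - replace b with (b - b' + b') by ring. rewrite Eb. ring.
Qed.

Lemma matrix_of_relations_unique (f g F1 F2 : R -> C) (S S' : M2) :
  lin_indep f g ->
  (forall x, F1 x = m11 S * f x + m21 S * g x) -> (forall x, F2 x = m12 S * f x + m22 S * g x) ->
  (forall x, F1 x = m11 S' * f x + m21 S' * g x) -> (forall x, F2 x = m12 S' * f x + m22 S' * g x) ->
  S = S'.
Proof.
  intros HL E1 E2 E1' E2'.
  destruct (lin_indep_coeff_unique f g (m11 S) (m21 S) (m11 S') (m21 S') HL) as [E11 E21].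
  { intro x. rewrite <- E1, <- E1'. reflexivity. }
  destruct (lin_indep_coeff_unique f g (m12 S) (m22 S) (m12 S') (m22 S') HL) as [E12 E22].
  { intro x. rewrite <- E2, <- E2'. reflexivity. }
  destruct S, S'. simpl in *. subst. reflexivity.
Qed.

Definition transfer_class (A : M2) : Prop :=
  m12 A = Cconj (m21 A) /\ m22 A = Cconj (m11 A) /\ m11 A * m22 A - m12 A * m21 A = 1.

(* |p|^2 = 1 + |q|^2 > 0, so the diagonal entries of a matrix in T do not vanish
   (this makes the coin M(T) well defined). *)
Lemma conj_nonzero_of_unimodular (p q : C) : p * Cconj p - q * Cconj q = 1 -> Cconj p <> 0.
Proof.
  intros H Z. rewrite Z, Cmult_0_r in H. apply (f_equal fst) in H.
  destruct q as [q1 q2]. simpl in H. nra.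
Qed.

(* The transfer matrix between two bases (g1, conj g1), (g2, conj g2) with the same
   nonzero Wronskian lies in T: the conjugation symmetry comes from uniqueness of
   coefficients, the determinant from [unimodular_of_wronskian]. *)
Lemma transfer_matrix_in_class (g1 g2 : R -> C) (A : M2) (w : C) :
  w <> 0 -> lin_indep g1 (cconjf g1) ->
  wronskian_is g1 (cconjf g1) w -> wronskian_is g2 (cconjf g2) w ->
  (forall x, g2 x = m11 A * g1 x + m21 A * cconjf g1 x /\
             cconjf g2 x = m12 A * g1 x + m22 A * cconjf g1 x) ->
  transfer_class A.
Proof.
  intros Hw HL W1 W2 HA.
  assert (Hdet : m11 A * Cconj (m11 A) - m21 A * Cconj (m21 A) = 1).
  { apply (unimodular_of_wronskian g1 g2 _ _ w Hw W1 W2). intro x. apply HA. }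
  assert (Hconj : m12 A = Cconj (m21 A) /\ m22 A = Cconj (m11 A)).
  { apply (lin_indep_coeff_unique g1 (cconjf g1)); [exact HL|]. intro x.
    destruct (HA x) as [E1 E2]. rewrite <- E2. unfold cconjf at 1. rewrite E1.
    unfold cconjf. rewrite Cconj_add, !Cconj_mul, Cconj_conj. ring. }
  destruct Hconj as [E12 E22]. split; [exact E12|]. split; [exact E22|].
  rewrite E12, E22, <- Hdet. ring.
Qed.

(* If g2 = p g1 + q conj g1 with |p|^2 - |q|^2 = 1, then g1 and conj g2 are independent,
   since conj g2 = conj q g1 + conj p conj g1 with conj p <> 0. *)
Lemma lin_indep_after_transfer (g1 g2 : R -> C) (p q : C) :
  lin_indep g1 (cconjf g1) -> (forall x, g2 x = p * g1 x + q * cconjf g1 x) ->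
  p * Cconj p - q * Cconj q = 1 -> lin_indep g1 (cconjf g2).
Proof.
  intros HL Hg2 Hdet a b Hab.
  pose proof (conj_nonzero_of_unimodular p q Hdet) as Hp.
  destruct (HL (a + b * Cconj q) (b * Cconj p)) as [Ea Eb].
  { intro x. rewrite <- (Hab x). unfold cconjf. rewrite Hg2.
    unfold cconjf. rewrite Cconj_add, !Cconj_mul, Cconj_conj. ring. }
  assert (Hb : b = 0).
  { replace b with (b * Cconj p / Cconj p) by (field; exact Hp). rewrite Eb. field. exact Hp. }
  split; [|exact Hb]. rewrite Hb in Ea. rewrite <- Ea. ring.
Qed.

Lemma solutions_independent (h : R) (V : R -> R) (lam : R) (g1 g2 : R -> C) (w : C) :
  w <> 0 -> sol_basis h V lam g1 (cconjf g1) -> is_sol h V lam g2 ->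
  wronskian_is g1 (cconjf g1) w -> wronskian_is g2 (cconjf g2) w ->
  lin_indep g1 (cconjf g2).
Proof.
  intros Hw [_ [_ [HL Hspan]]] Hsol W1 W2.
  destruct (Hspan g2 Hsol) as [p [q Epq]].
  apply (lin_indep_after_transfer _ _ p q HL Epq).
  exact (unimodular_of_wronskian _ _ p q w Hw W1 W2 Epq).
Qed.

(* This is the identity behind U_n = M(T_n). *)
Lemma vertex_identity (A : M2) (G Gb L Rt : C) : transfer_class A ->
  G * fst (mulv (Mmap A) (L, Rt)) + Gb * Rt =
  (m11 A * G + m21 A * Gb) * L + (m12 A * G + m22 A * Gb) * snd (mulv (Mmap A) (L, Rt)).
Proof.
  destruct A as [p t12 q t22]. intros [E12 [E22 Hdet]]. simpl in *. subst t12 t22.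
  assert (Hunit : p * Cconj p - q * Cconj q = 1) by (rewrite <- Hdet; ring).
  pose proof (conj_nonzero_of_unimodular p q Hunit) as Hp.
  unfold Mmap, mulv. simpl.
  (* the two sides differ by G L (1 - (|p|^2 - |q|^2)) / conj p *)
  transitivity ((p * G + q * Gb) * L + (Cconj q * G + Cconj p * Gb) * (/ Cconj p * (- q) * L + / Cconj p * Rt)
                + G * L * (1 - (p * Cconj p - q * Cconj q)) / Cconj p).
  - field. exact Hp.
  - rewrite Hunit. field. exact Hp.
Qed.

(* Amplitudes carried by the edge between vertices n and n+1 of a walk state (vertex 0
   is -oo, vertex n0+1 is +oo): the left-moving one [left_amp] and the right-moving
   one [right_amp]. *)
Definition left_amp (Psi : qw_state) (n : nat) : C :=
  match n with O => qminf Psi | S _ => fst (qv Psi n) end.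

Definition right_amp (n0 : nat) (Psi : qw_state) (n : nat) : C :=
  if Nat.eqb n n0 then qpinf Psi else snd (qv Psi (S n)).

Lemma qw_fixed_local (n0 : nat) (Uc : nat -> M2) (Psi : qw_state) :
  (2 <= n0)%nat -> qw_fixed n0 Uc Psi -> forall k, (k < n0)%nat ->
  qv Psi (S k) = (left_amp Psi (S k), right_amp n0 Psi k) /\
  left_amp Psi k = fst (mulv (Uc (S k)) (qv Psi (S k))) /\
  right_amp n0 Psi (S k) = snd (mulv (Uc (S k)) (qv Psi (S k))).
Proof.
  intros Hn0 [Hint [Hm [Hp [H1 Hn]]]] k Hk. split; [|split].
  - unfold right_amp. replace (Nat.eqb k n0) with false by (symmetry; apply Nat.eqb_neq; lia).
    apply surjective_pairing.
  - destruct k as [|[|k]].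
    + exact Hm.
    + simpl. rewrite H1 at 1. simpl. apply Cplus_0_r.
    + simpl left_amp. rewrite (Hint (S (S k))) at 1 by lia. simpl. apply Cplus_0_r.
  - unfold right_amp. destruct (Nat.eqb_spec (S k) n0) as [E|E].
    + subst n0. exact Hp.
    + destruct (Nat.eq_dec (S (S k)) n0) as [E2|E2].
      * rewrite <- E2 in Hn. rewrite Hn at 1. simpl. rewrite Cplus_0_l.
        replace (S (S k) - 1)%nat with (S k) by lia. reflexivity.
      * rewrite (Hint (S (S k))) at 1 by lia. simpl. rewrite Cplus_0_l.
        replace (S (S k) - 1)%nat with (S k) by lia. reflexivity.
Qed.

(* Conservation along the walk: for a fixed point Psi the function
   g_k L_k + conj g_k R_k of x does not depend on the edge k; comparing the two ends
   gives the Schroedinger solution encoded by Psi. *)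
Lemma qw_conservation (n0 : nat) (T : nat -> M2) (g : nat -> R -> C) (Psi : qw_state) :
  (2 <= n0)%nat ->
  (forall n, (1 <= n <= n0)%nat -> transfer_class (T n)) ->
  (forall n, (1 <= n <= n0)%nat -> forall x,
     g n x = m11 (T n) * g (n - 1)%nat x + m21 (T n) * cconjf (g (n - 1)%nat) x /\
     cconjf (g n) x = m12 (T n) * g (n - 1)%nat x + m22 (T n) * cconjf (g (n - 1)%nat) x) ->
  qw_fixed n0 (fun n => Mmap (T n)) Psi ->
  forall x, g 0%nat x * qminf Psi + cconjf (g 0%nat) x * snd (qv Psi 1%nat)
          = g n0 x * fst (qv Psi n0) + cconjf (g n0) x * qpinf Psi.
Proof.
  intros Hn0 Hclass Hrel Hfix x.
  assert (Hstep : forall k, (k <= n0)%nat ->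
    g 0%nat x * left_amp Psi 0 + cconjf (g 0%nat) x * right_amp n0 Psi 0
    = g k x * left_amp Psi k + cconjf (g k) x * right_amp n0 Psi k).
  { induction k as [|k IH]; intro Hk; [reflexivity|].
    rewrite IH by lia.
    destruct (qw_fixed_local n0 _ Psi Hn0 Hfix k ltac:(lia)) as [Hq [Hl Hr]].
    destruct (Hrel (S k) ltac:(lia) x) as [R1 R2].
    replace (S k - 1)%nat with k in R1, R2 by lia.
    rewrite Hl, Hr, Hq, R1, R2. apply vertex_identity, Hclass. lia. }
  specialize (Hstep n0 (le_n _)). unfold right_amp in Hstep.
  rewrite Nat.eqb_refl in Hstep.
  replace (Nat.eqb 0 n0) with false in Hstep by (symmetry; apply Nat.eqb_neq; lia).
  destruct n0 as [|n0']; [lia|]. exact Hstep.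
Qed.

Lemma qw_scattering_columns (n0 : nat) (Jmout Jmin Jpin Jpout : R -> C) (Sqw : M2)
  (Psi_pin Psi_min Psi_pout Psi_mout : qw_state) :
  (1 <= n0)%nat ->
  snd (qv Psi_min 1%nat) = 1 -> qminf Psi_min = 0 ->
  snd (qv Psi_mout 1%nat) = 0 -> qminf Psi_mout = 1 ->
  (forall x, Jpin x = Jmout x * qminf Psi_pin + Jmin x * snd (qv Psi_pin 1%nat)) ->
  (forall x, Jpout x = Jmout x * qminf Psi_pout + Jmin x * snd (qv Psi_pout 1%nat)) ->
  qw_lincomb n0 Psi_pin (m11 Sqw) Psi_mout (m21 Sqw) Psi_pout ->
  qw_lincomb n0 Psi_min (m12 Sqw) Psi_mout (m22 Sqw) Psi_pout ->
  (forall x, Jpin x = m11 Sqw * Jmout x + m21 Sqw * Jpout x) /\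
  (forall x, Jmin x = m12 Sqw * Jmout x + m22 Sqw * Jpout x).
Proof.
  intros Hn0 Min2 Mininf Mout2 Moutinf Epin Epout [LC1 [LC1m _]] [LC2 [LC2m _]].
  pose proof (f_equal snd (LC1 1%nat ltac:(lia))) as LC1v.
  pose proof (f_equal snd (LC2 1%nat ltac:(lia))) as LC2v.
  simpl in LC1v, LC2v. rewrite Mout2 in LC1v, LC2v. rewrite Moutinf in LC1m, LC2m.
  rewrite Min2 in LC2v. rewrite Mininf in LC2m.
  split; intro x.
  - rewrite Epin, Epout, LC1m, LC1v. ring.
  - rewrite Epout.
    transitivity (Jmout x * (m12 Sqw * 1 + m22 Sqw * qminf Psi_pout)
                  + Jmin x * (m12 Sqw * 0 + m22 Sqw * snd (qv Psi_pout 1%nat))).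
    + rewrite <- LC2m, <- LC2v. ring.
    + ring.
Qed.

Theorem mainTheorem3
  (h : R) (V : R -> R) (lam0 lam1 lam : R) (n0 : nat) (xs : nat -> R)
  (Jpin Jmin Jpout Jmout : R -> C) (g : nat -> R -> C) (T : nat -> M2)
  (Sqm Sqw : M2) (Psi_pin Psi_min Psi_pout Psi_mout : qw_state) :
  (0 < h)%R ->
  (forall x, continuity_pt V x) ->
  (exists Cst eps : R, (0 < Cst)%R /\ (0 < eps)%R /\
     forall x, (Rabs (V x) <= Cst * Rpower (1 + Rabs x) (- 1 - eps))%R) ->
  (0 < lam0)%R -> (lam0 <= lam1)%R -> (lam0 <= lam <= lam1)%R ->
  (* level set {V >= lam0} = union of K_n = [x_{2n-1}, x_{2n}], n = 1..n0 *)
  (2 <= n0)%nat ->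
  (forall k, (1 <= k < 2 * n0)%nat -> (xs k < xs (S k))%R) ->
  (forall x, (lam0 <= V x)%R <->
     exists n, (1 <= n <= n0)%nat /\ (xs (2 * n - 1)%nat <= x <= xs (2 * n)%nat)%R) ->
  (* Jost solutions *)
  is_sol h V lam Jpin -> jost_asym h lam 1 true Jpin ->
  is_sol h V lam Jmin -> jost_asym h lam 1 false Jmin ->
  is_sol h V lam Jpout -> jost_asym h lam (-1) true Jpout ->
  is_sol h V lam Jmout -> jost_asym h lam (-1) false Jmout ->
  (* scattering matrix of QM: (J+in, J-in) = (J-out, J+out) Sqm *)
  (forall x, Jpin x = m11 Sqm * Jmout x + m21 Sqm * Jpout x) ->
  (forall x, Jmin x = m12 Sqm * Jmout x + m22 Sqm * Jpout x) ->
  (* the bases (g_n, conj g_n) *)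
  (forall n, (n <= n0)%nat -> sol_basis h V lam (g n) (cconjf (g n))) ->
  g 0%nat = Jmout -> g n0 = Jpin ->
  (exists w : C, forall n, (n <= n0)%nat -> wronskian_is (g n) (cconjf (g n)) w) ->
  (forall n, (1 <= n <= n0)%nat -> lin_indep (g (n - 1)%nat) (cconjf (g n))) ->
  (* transfer matrices: (g_{n-1}, conj g_{n-1}) T_n = (g_n, conj g_n) *)
  (forall n, (1 <= n <= n0)%nat -> forall x,
     g n x = m11 (T n) * g (n - 1)%nat x + m21 (T n) * cconjf (g (n - 1)%nat) x /\
     cconjf (g n) x = m12 (T n) * g (n - 1)%nat x + m22 (T n) * cconjf (g (n - 1)%nat) x) ->
  (* quantum walk with coins U_n = M(T_n) and its generalized eigenstates *)
  let Uc := fun n => Mmap (T n) in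
  qw_fixed n0 Uc Psi_min /\ snd (qv Psi_min 1%nat) = 1 /\ qminf Psi_min = 0 ->
  qw_fixed n0 Uc Psi_mout /\ snd (qv Psi_mout 1%nat) = 0 /\ qminf Psi_mout = 1 ->
  qw_fixed n0 Uc Psi_pin /\ fst (qv Psi_pin n0) = 1 /\ qpinf Psi_pin = 0 ->
  qw_fixed n0 Uc Psi_pout /\ fst (qv Psi_pout n0) = 0 /\ qpinf Psi_pout = 1 ->
  (* scattering matrix of QW: (Psi+in, Psi-in) = (Psi-out, Psi+out) Sqw *)
  qw_lincomb n0 Psi_pin (m11 Sqw) Psi_mout (m21 Sqw) Psi_pout ->
  qw_lincomb n0 Psi_min (m12 Sqw) Psi_mout (m22 Sqw) Psi_pout ->
  Sqm = Sqw.
Proof.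
  intros Hh _ _ Hl0 _ Hlam Hn0 _ _ Jpin_sol Jpin_as Jmin_sol Jmin_as Jpout_sol Jpout_as
    _ Jmout_as Sqm1 Sqm2 Hbasis Hg0 Hgn0 [w Hw] _ HT Uc [_ [Min2 Mininf]]
    [_ [Mout2 Moutinf]] [Fpin [Pin1 Pininf]] [Fpout [Pout1 Poutinf]] LC1 LC2.
  assert (Hl : (0 < lam)%R) by lra.
  assert (Hw0 : w <> 0).
  { apply (jost_in_wronskian_nonzero h lam Jpin w Hh Hl Jpin_as). rewrite <- Hgn0. apply Hw. lia. }
  assert (Hclass : forall n, (1 <= n <= n0)%nat -> transfer_class (T n)).
  { intros n Hn. destruct (Hbasis (n - 1)%nat ltac:(lia)) as [_ [_ [HL _]]].
    apply (transfer_matrix_in_class (g (n - 1)%nat) (g n) _ w Hw0 HL);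
      [apply Hw; lia | apply Hw; lia | apply HT, Hn]. }
  pose proof (Hbasis 0%nat (Nat.le_0_l _)) as B0. pose proof (Hbasis n0 (le_n _)) as Bn0.
  rewrite Hg0 in B0. rewrite Hgn0 in Bn0.
  pose proof (jost_partner_conj h V lam 1 (-1) true Jpin Jpout Hh Hl (or_introl eq_refl)
                ltac:(lra) Bn0 Jpout_sol Jpin_as Jpout_as) as Epout.
  pose proof (jost_partner_conj h V lam (-1) 1 false Jmout Jmin Hh Hl (or_intror eq_refl)
                ltac:(lra) B0 Jmin_sol Jmout_as Jmin_as) as Emin.
  assert (Cons : forall Psi, qw_fixed n0 Uc Psi -> forall x,
     Jmout x * qminf Psi + Jmin x * snd (qv Psi 1%nat) = Jpin x * fst (qv Psi n0) + Jpout x * qpinf Psi).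
  { intros Psi F x. rewrite Epout, Emin, <- Hg0, <- Hgn0.
    exact (qw_conservation n0 T g Psi Hn0 Hclass HT F x). }
  assert (Indep : lin_indep Jmout Jpout).
  { intros a b Hab. apply (solutions_independent h V lam Jmout Jpin w Hw0 B0 Jpin_sol);
      [rewrite <- Hg0 | rewrite <- Hgn0 |]; [apply Hw; lia .. |].
    intro x. unfold cconjf. rewrite <- Epout. apply Hab. }
  assert (Rpin : forall x, Jpin x = Jmout x * qminf Psi_pin + Jmin x * snd (qv Psi_pin 1%nat)).
  { intro x. rewrite (Cons Psi_pin Fpin), Pin1, Pininf. ring. }
  assert (Rpout : forall x, Jpout x = Jmout x * qminf Psi_pout + Jmin x * snd (qv Psi_pout 1%nat)).
  { intro x. rewrite (Cons Psi_pout Fpout), Pout1, Poutinf. ring. }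
  destruct (qw_scattering_columns n0 Jmout Jmin Jpin Jpout Sqw Psi_pin Psi_min Psi_pout Psi_mout
              ltac:(lia) Min2 Mininf Mout2 Moutinf Rpin Rpout LC1 LC2) as [Q1 Q2].
  exact (matrix_of_relations_unique _ _ _ _ Sqm Sqw Indep Sqm1 Sqm2 Q1 Q2).
Qed.
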